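(* Let $\Omega\in\mathscr A$ with $\mathfrak m(\Omega)<+\infty$ and for $\kappa>0$ let $\mathcal J_\kappa[F]:=P(F)-\kappa\,\mathfrak m(F)$ for measurable $F\subset\Omega$. If (P.4) and (P.5) hold, then $\mathcal J_\kappa$ admits a minimizer among measurable subsets of $\Omega$. If in addition (P.1) holds, then: (i) if $\mathcal J_\kappa$ has a minimizer $E$ with $\mathfrak m(E)>0$, then $\Omega$ is $1$-admissible and $\kappa\ge h_1(\Omega)$; (ii) if $\Omega$ is $1$-admissible and $\kappa>h_1(\Omega)$, then $\mathcal J_\kappa$ has a minimizer with positive $\mathfrak m$-measure; (iii) if $\Omega$ has a $1$-Cheeger set, then $\mathcal J_\kappa$ has a minimizer with positive $\mathfrak m$-measure if and only if $\kappa\ge h_1(\Omega)$.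
   Context: $(X,\mathscr A,\mathfrak m)$ is a non-negative $\sigma$-finite measure space; for $A,B\in\mathscr A$, ''$A\subset B$'' means $\mathfrak m(A\setminus B)=0$. $P\colon\mathscr A\to[0,+\infty]$ is a proper functional. (P.1): $P(\emptyset)=0$. (P.4): if $\chi_{E_k}\to\chi_E$ in $L^1(X,\mathfrak m)$ then $P(E)\le\liminf_k P(E_k)$. (P.5): for every $c\ge0$, $\{\chi_E:E\in\mathscr A,\ P(E)\le c\}$ is compact in $L^1(X,\mathfrak m)$. $\Omega$ is $1$-admissible if it contains some $E$ with $0<\mathfrak m(E)<+\infty$, $P(E)<+\infty$; $h_1(\Omega)=\inf\{P(E)/\mathfrak m(E): E\subset\Omega,\ 0<\mathfrak m(E)<+\infty,\ P(E)<+\infty\}$; a set attaining it is a $1$-Cheeger set of $\Omega$. *)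

From HB Require Import structures.
From mathcomp Require Import all_boot all_order all_algebra.
From mathcomp Require Import all_classical all_reals all_analysis.
Set Implicit Arguments. Unset Strict Implicit. Unset Printing Implicit Defensive.
Import Order.TTheory GRing.Theory Num.Theory.
Local Open Scope classical_set_scope.
Local Open Scope ring_scope.
Local Open Scope ereal_scope.

Section cheeger_defs.
Context (d : measure_display) (T : measurableType d) (R : realType)
  (mu : {measure set T -> \bar R}).

(* "A \subset B" in the paper's sense: mu (A \ B) = 0 *)
Definition aesub (A B : set T) : Prop := mu (A `\` B) = 0.

Definition L1_indic_cvg (E : nat -> set T) (F : set T) : Prop :=
  (fun k => \int[mu]_x (`| (\1_(E k) x : R) - \1_F x |%R)%:E) @ \oo --> 0.

(* P is proper: not identically +oo (values already in [0,+oo]) *)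
Definition P_proper (P : set T -> \bar R) : Prop :=
  (forall E, measurable E -> 0 <= P E) /\ exists E, measurable E /\ P E < +oo.

Definition P1 (P : set T -> \bar R) : Prop := P set0 = 0.

Definition P4 (P : set T -> \bar R) : Prop :=
  forall (E : nat -> set T) (F : set T),
    (forall k, measurable (E k)) -> measurable F ->
    L1_indic_cvg E F -> P F <= limn_einf (fun k => P (E k)).

(* compactness in L^1 (a metric space) of {chi_E : P E <= c}, stated
   sequentially: every sequence has an L^1-convergent subsequence whose
   limit is again of the form chi_F with P F <= c *)
Definition P5 (P : set T -> \bar R) : Prop :=
  forall c : R, (0 <= c)%R ->
  forall E : nat -> set T, (forall k, measurable (E k)) ->
    (forall k, P (E k) <= c%:E) ->
    exists (phi : nat -> nat) (F : set T),
      {homo phi : m n / (m < n)%N >-> (m < n)%N} /\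
      measurable F /\ P F <= c%:E /\ L1_indic_cvg (E \o phi) F.

Definition admissible_set (P : set T -> \bar R) (Om E : set T) : Prop :=
  measurable E /\ aesub E Om /\ 0 < mu E /\ mu E < +oo /\ P E < +oo.

Definition one_admissible (P : set T -> \bar R) (Om : set T) : Prop :=
  exists E, admissible_set P Om E.

Definition h1 (P : set T -> \bar R) (Om : set T) : \bar R :=
  ereal_inf [set ((fine (P E)) / (fine (mu E)))%R%:E | E in admissible_set P Om].

Definition cheeger_set (P : set T -> \bar R) (Om E : set T) : Prop :=
  admissible_set P Om E /\ ((fine (P E)) / (fine (mu E)))%R%:E = h1 P Om.

Definition Jk (P : set T -> \bar R) (kappa : R) (F : set T) : \bar R :=
  P F - kappa%:E * mu F.

Definition J_minimizer (P : set T -> \bar R) (kappa : R) (Om E : set T) : Prop :=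
  measurable E /\ aesub E Om /\
  forall F, measurable F -> aesub F Om -> Jk P kappa E <= Jk P kappa F.

End cheeger_defs.

From HB Require Import structures.
From mathcomp Require Import all_boot all_order all_algebra.
From mathcomp Require Import all_classical all_reals all_analysis.
From mathcomp Require Import measurable_realfun.
From mathcomp Require Import lra.
Import Order.TTheory GRing.Theory Num.Theory.
Local Open Scope classical_set_scope.
Local Open Scope ring_scope.
Local Open Scope ereal_scope.

(* Existence is the direct method: J_kappa is bounded below by
   -kappa m(Omega), so a minimizing sequence has uniformly bounded P; (P.5)
   extracts an L^1-convergent subsequence, and (P.4) together with the
   L^1-continuity of F |-> m(F) makes its limit a minimizer.  With
   P(emptyset) = 0 the empty set is a competitor of energy 0: a minimizer E of
   positive measure thus has P(E) <= kappa m(E), whereas an admissible G with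
   P(G)/m(G) < kappa has negative energy and rules out null minimizers.  For
   kappa = h_1(Omega), J_kappa is nonnegative and vanishes on Cheeger sets. *)

Section L1_indicators.
Context {d : measure_display} {T : measurableType d} {R : realType}
  (mu : {measure set T -> \bar R}).

Lemma measurable_abs_indicB (A B : set T) : measurable A -> measurable B ->
  measurable_fun setT (fun x => (`|(\1_A x : R) - \1_B x|)%:E).
Proof.
move=> mA mB; apply/measurable_EFinP.
apply: (measurableT_comp (@normr_measurable R setT)).
exact: measurable_funB (measurable_indic _) (measurable_indic _).
Qed.

Lemma measureD_le_L1_indic {A B : set T} : measurable A -> measurable B ->
  mu (A `\` B) <= \int[mu]_x (`|(\1_B x : R) - \1_A x|)%:E.
Proof.
move=> mA mB.
rewrite -[A `\` B]setIT -integral_indic//; last exact: measurableD.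
apply: (ge0_le_integral mu measurableT).
- by move=> x _; rewrite lee_fin.
- by apply/measurable_EFinP; exact: measurable_indic (measurableD mA mB).
- exact: measurable_abs_indicB.
move=> x _; rewrite lee_fin !indicE in_setD.
have [xA|xA] := boolP (x \in A); have [xB|xB] := boolP (x \in B) => /=.
all: rewrite ?normr_ge0//.
by rewrite sub0r normrN normr1.
Qed.

Lemma measure_le_addD {A B : set T} : measurable A -> measurable B ->
  mu A <= mu B + mu (A `\` B).
Proof.
move=> mA mB.
have eA : A = (A `&` B) `|` (A `\` B).
  apply/seteqP; split => x /=; last by case=> -[].
  by case: (pselect (B x)) => Bx Ax; [left|right].
rewrite {1}eA (le_trans (measureU2 _ _ _)) ?leeD2r//; first exact: measurableI.
- exact: measurableD.
- by rewrite le_measure// ?inE//; exact: measurableI.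
Qed.

Lemma measure_le_add_L1_indic {A B : set T} : measurable A -> measurable B ->
  mu A <= mu B + \int[mu]_x (`|(\1_A x : R) - \1_B x|)%:E.
Proof.
move=> mA mB; apply: (le_trans (measure_le_addD mA mB)); rewrite leeD2l//.
under eq_integral do rewrite distrC.
exact: measureD_le_L1_indic.
Qed.

Lemma aesub_measure_le {A B : set T} : measurable A -> measurable B ->
  aesub mu A B -> mu A <= mu B.
Proof.
by move=> mA mB AB; rewrite (le_trans (measure_le_addD mA mB))// AB adde0.
Qed.

Lemma aesub0 (Om : set T) : aesub mu set0 Om.
Proof. by rewrite /aesub set0D measure0. Qed.

Lemma aesub_L1_indic_lim {E : nat -> set T} {F Om : set T} :
  (forall k, measurable (E k)) -> measurable F -> measurable Om ->
  (forall k, aesub mu (E k) Om) -> L1_indic_cvg mu E F -> aesub mu F Om.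
Proof.
move=> mE mF mOm EOm cvgF; apply/eqP; rewrite eq_le measure_ge0 andbT.
apply: (cvge_to_ge cvgF); apply: nearW => k.
have mFO := measurableD mF mOm; have mEO := measurableD (mE k) mOm.
rewrite (le_trans (measure_le_addD mFO mEO))// EOm add0e.
apply: le_trans (measureD_le_L1_indic mF (mE k)).
rewrite le_measure ?inE//; first exact: measurableD.
- exact: measurableD.
- by move=> x [[Fx nOx] nEO]; split => // Ex; apply: nEO.
Qed.

End L1_indicators.

Lemma le_limn_einf {R : realType} {u v : (\bar R)^nat} :
  (forall n, u n <= v n) -> limn_einf u <= limn_einf v.
Proof.
move=> uv; rewrite !limn_einf_lim; apply: lee_lim; try exact: is_cvg_einfs.
apply: nearW => n; apply: le_ereal_inf_tmp => _ [k /= nk <-].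
by apply: le_trans (uv k); apply: ereal_inf_lbound; exists k.
Qed.

Lemma homo_ltn_leq_id (phi : nat -> nat) :
  {homo phi : m n / (m < n)%N >-> (m < n)%N} -> forall k, (k <= phi k)%N.
Proof.
by move=> hphi; elim=> [//|k IH]; apply: leq_ltn_trans IH (hphi _ _ _).
Qed.

Lemma harmonic_le {R : numFieldType} (k j : nat) :
  (k <= j)%N -> (harmonic j <= harmonic k :> R)%R.
Proof. by move=> kj; rewrite /harmonic /= lef_pV2 ?posrE ?ltr0n// ler_nat. Qed.

Section direct_method.
Context {d : measure_display} {T : measurableType d} {R : realType}
  {mu : {measure set T -> \bar R}} {P : set T -> \bar R} {Om : set T}
  {kappa : R}.
Hypotheses (P_ge0 : forall E, measurable E -> 0 <= P E)
  (mOm : measurable Om) (muOm_fin : mu Om < +oo) (kappa_ge0 : (0 <= kappa)%R).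

Let competitor F := measurable F /\ aesub mu F Om.
Let Jinf := ereal_inf [set Jk mu P kappa F | F in competitor].

Lemma competitor_measureE {F} : measurable F -> aesub mu F Om ->
  mu F = (fine (mu F))%:E.
Proof.
move=> mF FOm; rewrite fineK// ge0_fin_numE//.
exact: le_lt_trans (aesub_measure_le mu mF mOm FOm) muOm_fin.
Qed.

Lemma competitor_measure_le {F} : measurable F -> aesub mu F Om ->
  (fine (mu F) <= fine (mu Om))%R.
Proof.
move=> mF FOm; rewrite -lee_fin -competitor_measureE// fineK//.
  exact: aesub_measure_le.
by rewrite ge0_fin_numE.
Qed.

Lemma JkE {F} : measurable F -> aesub mu F Om ->
  Jk mu P kappa F = P F - (kappa * fine (mu F))%:E.
Proof. by move=> mF FOm; rewrite /Jk {1}(competitor_measureE mF FOm) EFinM. Qed.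

Lemma PE_Jk {F} : measurable F -> aesub mu F Om ->
  P F = Jk mu P kappa F + (kappa * fine (mu F))%:E.
Proof. by move=> mF FOm; rewrite JkE// subeK. Qed.

Lemma Jk_ge {F} : measurable F -> aesub mu F Om ->
  (- (kappa * fine (mu Om)))%:E <= Jk mu P kappa F.
Proof.
move=> mF FOm; rewrite JkE// EFinN -[X in X <= _]add0e.
apply: leeB; first exact: P_ge0.
by rewrite lee_fin ler_wpM2l// competitor_measure_le.
Qed.

Lemma Jinf_ge : (- (kappa * fine (mu Om)))%:E <= Jinf.
Proof. by apply: le_ereal_inf_tmp => _ [F [mF FOm] <-]; exact: Jk_ge. Qed.

Lemma J_minimizer_le_Jinf {E} : measurable E -> aesub mu E Om ->
  Jk mu P kappa E <= Jinf -> J_minimizer mu P kappa Om E.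
Proof.
move=> mE EOm EJinf; split => //; split => // F mF FOm.
by apply: le_trans EJinf _; apply: ereal_inf_lbound; exists F.
Qed.

Section minimizing_sequence.
Context {E : nat -> set T} {minJ : R}.
Hypotheses (JinfE : Jinf = minJ%:E) (mE : forall n, measurable (E n))
  (EOm : forall n, aesub mu (E n) Om)
  (JE : forall n, Jk mu P kappa (E n) < Jinf + (harmonic n)%:E).

Lemma minimizing_seq_P_le n : P (E n) <= (minJ + 1 + kappa * fine (mu Om))%:E.
Proof.
rewrite PE_Jk// EFinD; apply: leeD.
  apply/ltW/(lt_le_trans (JE n)).
  by rewrite JinfE -EFinD lee_fin lerD2l /harmonic /= invr_le1 ?unitfE// ler1n.
by rewrite lee_fin ler_wpM2l// competitor_measure_le.
Qed.

Lemma minimizing_seq_L1_lim_minimizer (phi : nat -> nat) F :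
  P4 mu P -> {homo phi : m n / (m < n)%N >-> (m < n)%N} -> measurable F ->
  L1_indic_cvg mu (E \o phi) F -> J_minimizer mu P kappa Om F.
Proof.
move=> P4P phi_incr mF cvgF.
have mEphi k : measurable ((E \o phi) k) by exact: mE.
have FOm : aesub mu F Om.
  exact: (aesub_L1_indic_lim mu mEphi mF mOm (fun k => EOm (phi k)) cvgF).
pose g : (\bar R)^nat :=
  fun k => \int[mu]_x (`|(\1_((E \o phi) k) x : R) - \1_F x|)%:E.
pose bound : (\bar R)^nat :=
  fun k => minJ%:E + (harmonic k)%:E + kappa%:E * (mu F + g k).
have P_bound k : P ((E \o phi) k) <= bound k.
  rewrite /= (PE_Jk (mE _) (EOm _)) /bound; apply: leeD.
    apply/ltW/(lt_le_trans (JE (phi k))).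
    by rewrite JinfE leeD2l// lee_fin harmonic_le// homo_ltn_leq_id.
  rewrite EFinM -competitor_measureE//.
  apply: lee_wpmul2l; first by rewrite lee_fin.
  exact: measure_le_add_L1_indic.
have bound_cvg : bound @ \oo --> minJ%:E + 0 + kappa%:E * (mu F + 0).
  apply: cvgeD; first by rewrite fin_num_adde_defr.
  - apply: cvgeD; first by rewrite fin_num_adde_defr.
      exact: cvg_cst.
    exact: cvge_harmonic.
  - apply: cvgeZl => //; apply: cvgeD; [|exact: cvg_cst|exact: cvgF].
    by rewrite competitor_measureE// fin_num_adde_defr.
have := P4P (E \o phi) F mEphi mF cvgF.
move=> /le_trans /(_ (le_limn_einf P_bound)).
rewrite (cvg_limn_einf_sup bound_cvg).1 !adde0 => PF.
apply: J_minimizer_le_Jinf => //.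
by rewrite JkE// JinfE leeBlDr// EFinM -competitor_measureE.
Qed.

End minimizing_sequence.

Lemma exists_J_minimizer : P4 mu P -> P5 mu P ->
  exists E, J_minimizer mu P kappa Om E.
Proof.
move=> P4P P5P.
have [Jinf_oo|Jinf_noo] := eqVneq Jinf +oo.
  exists set0; apply: (J_minimizer_le_Jinf measurable0 (aesub0 mu Om)).
  by rewrite Jinf_oo leey.
have Jinf_fin : Jinf \is a fin_num.
  rewrite fin_numE Jinf_noo andbT; apply/eqP => Jinf_Ny.
  by have := Jinf_ge; rewrite Jinf_Ny.
have JinfE : Jinf = (fine Jinf)%:E by rewrite fineK.
have /choice[E minE] n : exists F,
    competitor F /\ Jk mu P kappa F < Jinf + (harmonic n)%:E.
  have [_ [F FOm <-] JF] := lb_ereal_inf_adherent (harmonic_gt0 n) Jinf_fin.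
  by exists F.
have mE n := (minE n).1.1; have EOm n := (minE n).1.2; have JE n := (minE n).2.
have c_ge0 : (0 <= fine Jinf + 1 + kappa * fine (mu Om))%R.
  by have := Jinf_ge; rewrite JinfE lee_fin; lra.
have [phi [F [phi_incr [mF [_ cvgF]]]]] :=
  P5P _ c_ge0 E mE (minimizing_seq_P_le JinfE mE EOm JE).
exists F.
exact: (minimizing_seq_L1_lim_minimizer JinfE mE EOm JE phi F P4P).
Qed.

Let ratio F := (fine (P F) / fine (mu F))%R.

Lemma PE_fineK {F} : measurable F -> P F < +oo -> P F = (fine (P F))%:E.
Proof. by move=> mF PF; rewrite fineK// ge0_fin_numE// P_ge0. Qed.

Lemma Jk_set0 : P1 P -> Jk mu P kappa set0 = 0.
Proof. by move=> P1P; rewrite /Jk P1P measure0 mule0 sube0. Qed.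

Lemma admissible_measure_gt0 {F} : admissible_set mu P Om F ->
  (0 < fine (mu F))%R.
Proof.
by move=> [mF [FOm [muF_gt0 _]]]; rewrite -lte_fin -competitor_measureE.
Qed.

Lemma admissible_JkE {F} : admissible_set mu P Om F ->
  Jk mu P kappa F = (fine (mu F) * (ratio F - kappa))%:E.
Proof.
move=> admF; have [mF [FOm [_ [_ PF_fin]]]] := admF.
rewrite JkE// (PE_fineK mF PF_fin) -EFinB mulrBr /ratio mulrCA divff ?mulr1.
  by rewrite mulrC.
by rewrite gt_eqF// admissible_measure_gt0.
Qed.

Lemma h1_le_ratio {F} : admissible_set mu P Om F -> h1 mu P Om <= (ratio F)%:E.
Proof. by move=> admF; apply: ereal_inf_lbound; exists F. Qed.

Lemma J_minimizer_pos_h1_le {E} : P1 P -> J_minimizer mu P kappa Om E ->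
  0 < mu E -> one_admissible mu P Om /\ h1 mu P Om <= kappa%:E.
Proof.
move=> P1P [mE [EOm minE]] muE_gt0.
have JE_le0 : Jk mu P kappa E <= 0.
  by rewrite -Jk_set0//; exact: minE measurable0 (aesub0 mu Om).
have admE : admissible_set mu P Om E.
  do 4!split=> //; first by rewrite competitor_measureE// ltry.
  move: JE_le0; rewrite JkE// leeBlDr// add0e => /le_lt_trans; apply.
  exact: ltry.
split; first by exists E.
apply: le_trans (h1_le_ratio admE) _; rewrite lee_fin -subr_le0.
move: JE_le0; rewrite admissible_JkE// lee_fin pmulr_rle0//.
exact: admissible_measure_gt0.
Qed.

Lemma J_minimizer_pos_of_Jk_lt0 {E G} : J_minimizer mu P kappa Om E ->
  measurable G -> aesub mu G Om -> Jk mu P kappa G < 0 -> 0 < mu E.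
Proof.
move=> [mE [_ minE]] mG GOm JG_lt0; rewrite lt0e measure_ge0 andbT.
apply/eqP => muE0; have := le_lt_trans (minE G mG GOm) JG_lt0.
by rewrite /Jk muE0 mule0 sube0 ltNge P_ge0.
Qed.

Lemma exists_Jk_lt0_of_h1_lt : h1 mu P Om < kappa%:E ->
  exists2 G, admissible_set mu P Om G & Jk mu P kappa G < 0.
Proof.
move=> /ereal_inf_lt[_ [G admG <-]]; rewrite lte_fin -subr_lt0 => ratio_lt.
exists G; rewrite // admissible_JkE// lte_fin pmulr_rlt0//.
exact: admissible_measure_gt0.
Qed.

Lemma Jk_ge0_of_le_h1 {F} : kappa%:E <= h1 mu P Om -> measurable F ->
  aesub mu F Om -> 0 <= Jk mu P kappa F.
Proof.
move=> kappa_le mF FOm.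
have [PF_oo|PF_noo] := eqVneq (P F) +oo; first by rewrite JkE// PF_oo /= leey.
have [muF0|muF_neq0] := eqVneq (mu F) 0.
  by rewrite /Jk muF0 mule0 sube0 P_ge0.
have admF : admissible_set mu P Om F.
  have muF_gt0 : 0 < mu F by rewrite lt0e muF_neq0 measure_ge0.
  have muF_fin : mu F < +oo by rewrite competitor_measureE// ltry.
  by do ![split] => //; rewrite ltey.
rewrite admissible_JkE// lee_fin; apply: mulr_ge0.
  exact/ltW/(admissible_measure_gt0 admF).
by rewrite subr_ge0 -lee_fin (le_trans kappa_le (h1_le_ratio admF)).
Qed.

Lemma cheeger_J_minimizer {C} : cheeger_set mu P Om C ->
  h1 mu P Om = kappa%:E -> J_minimizer mu P kappa Om C.
Proof.
move=> [admC ratioC] h1E; have [mC [COm _]] := admC.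
apply: (J_minimizer_le_Jinf mC COm); rewrite admissible_JkE//.
have -> : ratio C = kappa by apply: EFin_inj; rewrite ratioC.
rewrite subrr mulr0; apply: le_ereal_inf_tmp => _ [F [mF FOm] <-].
by apply: Jk_ge0_of_le_h1; rewrite ?h1E.
Qed.

End direct_method.

Theorem theorem4p6 (d : measure_display) (T : measurableType d) (R : realType)
  (mu : {measure set T -> \bar R}) (P : set T -> \bar R)
  (Om : set T) (kappa : R) :
  sigma_finite setT mu -> P_proper P ->
  measurable Om -> mu Om < +oo -> (0 < kappa)%R ->
  (P4 mu P -> P5 mu P -> exists E, J_minimizer mu P kappa Om E) /\
  (P4 mu P -> P5 mu P -> P1 P ->
    ((forall E, J_minimizer mu P kappa Om E -> 0 < mu E ->
        one_admissible mu P Om /\ h1 mu P Om <= kappa%:E) /\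
     (one_admissible mu P Om -> h1 mu P Om < kappa%:E ->
        exists E, J_minimizer mu P kappa Om E /\ 0 < mu E) /\
     ((exists C, cheeger_set mu P Om C) ->
        ((exists E, J_minimizer mu P kappa Om E /\ 0 < mu E) <->
         h1 mu P Om <= kappa%:E)))).
Proof.
move=> _ [P_ge0 _] mOm muOm_fin /ltW kappa_ge0.
have minimizer := exists_J_minimizer P_ge0 mOm muOm_fin kappa_ge0.
split=> // P4P P5P P1P.
have pos_h1_le E : J_minimizer mu P kappa Om E -> 0 < mu E ->
    one_admissible mu P Om /\ h1 mu P Om <= kappa%:E.
  exact: (J_minimizer_pos_h1_le P_ge0 mOm muOm_fin P1P).
have pos_of_h1_lt : h1 mu P Om < kappa%:E ->
    exists E, J_minimizer mu P kappa Om E /\ 0 < mu E.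
  move=> /(exists_Jk_lt0_of_h1_lt P_ge0 mOm muOm_fin)[G [mG [GOm _]] JG_lt0].
  have [E minE] := minimizer P4P P5P.
  exists E; split=> //.
  exact: (J_minimizer_pos_of_Jk_lt0 P_ge0 minE mG GOm JG_lt0).
split=> //; split=> [_|[C cheegerC]]; first exact: pos_of_h1_lt.
split=> [[E [minE /(pos_h1_le E minE)[]]]|] //.
rewrite le_eqVlt => /predU1P[h1E|]; last exact: pos_of_h1_lt.
have [[_ [_ [muC_gt0 _]]] _] := cheegerC.
exists C; split=> //.
exact: (cheeger_J_minimizer P_ge0 mOm muOm_fin cheegerC h1E).
Qed.
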